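(* Let $\mathbf{A}\in\mathbb{R}^{m\times n}$, $\mathbf{c}\in\mathbb{R}^m$ and $0<\epsilon\le1$. Let $\mathbf{x}$ be any solution to the LSA instance $(\mathbf{A},\mathbf{c},\epsilon)$, and output YES if $\|\mathbf{A}\mathbf{x}-\mathbf{c}\|_2\le\epsilon\|\mathbf{c}\|_2$ and NO otherwise. Then this output is a correct answer to the LSD problem for $(\mathbf{A},\mathbf{c},\epsilon)$.
   Context: $\boldsymbol{\Pi}_{\mathbf{A}}$ is the orthogonal projection onto the image of $\mathbf{A}$. A solution to the LSA instance $(\mathbf{A},\mathbf{c},\epsilon)$ is any $\mathbf{x}\in\mathbb{R}^n$ with $\|\mathbf{A}\mathbf{x}-\boldsymbol{\Pi}_{\mathbf{A}}\mathbf{c}\|_2\le\epsilon\|\boldsymbol{\Pi}_{\mathbf{A}}\mathbf{c}\|_2$. The LSD (linear system decision) problem for $(\mathbf{A},\mathbf{c},\epsilon)$ requires outputting YES if there exists $\mathbf{x}$ with $\mathbf{A}\mathbf{x}=\mathbf{c}$, outputting NO if $\|\mathbf{A}\mathbf{x}-\mathbf{c}\|_2>\epsilon\|\mathbf{c}\|_2$ for all $\mathbf{x}$, and allows any output otherwise. *)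

From HB Require Import structures.
From mathcomp Require Import all_boot all_order all_algebra.
From mathcomp Require Import reals.
Set Implicit Arguments. Unset Strict Implicit. Unset Printing Implicit Defensive.
Import Order.TTheory GRing.Theory Num.Theory.
Local Open Scope ring_scope.

Definition norm2 (R : realType) (m : nat) (v : 'cV[R]_m) : R :=
  Num.sqrt (\sum_(i < m) (v i 0) ^+ 2).

Definition is_orth_proj_img (R : realType) (m n : nat)
  (A : 'M[R]_(m, n)) (c p : 'cV[R]_m) : Prop :=
  (exists y : 'cV[R]_n, A *m y = p) /\ A^T *m (c - p) = 0.

Definition LSA_solution (R : realType) (m n : nat)
  (A : 'M[R]_(m, n)) (c : 'cV[R]_m) (eps : R) (x : 'cV[R]_n) : Prop :=
  forall p, is_orth_proj_img A c p -> norm2 (A *m x - p) <= eps * norm2 p.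

(* out (true = YES, false = NO) is a correct answer to the LSD problem. *)
Definition LSD_correct (R : realType) (m n : nat)
  (A : 'M[R]_(m, n)) (c : 'cV[R]_m) (eps : R) (out : bool) : Prop :=
  ((exists x : 'cV[R]_n, A *m x = c) -> out = true) /\
  ((forall x : 'cV[R]_n, norm2 (A *m x - c) > eps * norm2 c) -> out = false).

From HB Require Import structures.
From mathcomp Require Import all_boot all_order all_algebra.
From mathcomp Require Import reals.
Import Order.TTheory GRing.Theory Num.Theory.
Local Open Scope ring_scope.

(* When c lies in the image of A it is its own projection, so an LSA solution
   already fits c to relative accuracy eps; when no x fits c that well, the
   test fails for the computed x as well. *)

Lemma is_orth_proj_img_self {R : realType} {m n : nat}
  {A : 'M[R]_(m, n)} {c : 'cV[R]_m} :
  (exists y : 'cV[R]_n, A *m y = c) -> is_orth_proj_img A c c.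
Proof. by move=> c_img; split; last by rewrite subrr mulmx0. Qed.

Lemma LSA_solution_consistent {R : realType} {m n : nat}
  {A : 'M[R]_(m, n)} {c : 'cV[R]_m} {eps : R} {x : 'cV[R]_n} :
  LSA_solution A c eps x -> (exists y : 'cV[R]_n, A *m y = c) ->
  norm2 (A *m x - c) <= eps * norm2 c.
Proof. by move=> x_sol c_img; apply/x_sol/is_orth_proj_img_self. Qed.

Theorem lemma10p2 (R : realType) (m n : nat) (A : 'M[R]_(m, n))
  (c : 'cV[R]_m) (eps : R) (x : 'cV[R]_n) :
  0 < eps -> eps <= 1 ->
  LSA_solution A c eps x ->
  LSD_correct A c eps (norm2 (A *m x - c) <= eps * norm2 c).
Proof.
move=> _ _ x_sol; split.
- move=> c_img; exact: (LSA_solution_consistent x_sol c_img).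
- by move=> no_fit; apply/negbTE; rewrite -ltNge.
Qed.
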